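(* Under the hypotheses of Lemma C2 (Pauli-spanned Cartan decomposition $\mathfrak g=\mathfrak k\oplus\mathfrak m$; pairwise commuting Pauli strings $b_1,\dots,b_d\in\tilde{\mathfrak m}$ in one connected component of the frustration graph of $\mathfrak g$; $2\le r\le d$ with $\tilde{\mathfrak k}^{r-1}_{1\dots r-2}$ non-empty), if in addition $\tilde{\mathfrak k}^r_{1\dots r-2}$ is non-empty, then $|\tilde{\mathfrak k}^{r-1}_{1\dots r-2}|=|\tilde{\mathfrak k}^r_{1\dots r-2}|$; equivalently, $|\tilde{\mathfrak k}^{r-1}_{1\dots r-2,r}|=|\tilde{\mathfrak k}^r_{1\dots r-1}|$.
   Context: Pauli strings on $n$ qubits are tensor products of $I,X,Y,Z$, not all identity; two Pauli strings either commute or anticommute. A Pauli-spanned Cartan decomposition is $\mathfrak g=\mathfrak k\oplus\mathfrak m\subseteq\mathfrak{su}(2^n)$ with $\mathfrak k=\mathrm{span}_{i\mathbb R}\tilde{\mathfrak k}$, $\mathfrak m=\mathrm{span}_{i\mathbb R}\tilde{\mathfrak m}$, $\mathfrak g=\mathrm{span}_{i\mathbb R}\tilde{\mathfrak g}$ with $\tilde{\mathfrak g}=\tilde{\mathfrak k}\sqcup\tilde{\mathfrak m}$ the set of all Pauli strings (up to phase) $\sigma$ with $i\sigma\in\mathfrak g$, and $[\mathfrak k,\mathfrak k]\subseteq\mathfrak k$, $[\mathfrak m,\mathfrak m]\subseteq\mathfrak k$, $[\mathfrak k,\mathfrak m]\subseteq\mathfrak m$. The frustration graph of $\mathfrak g$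 has vertex set $\tilde{\mathfrak g}$, with edges between anticommuting pairs. For disjoint index lists, $\tilde{\mathfrak k}^{i_1i_2\dots}_{j_1j_2\dots}$ is the set of $k\in\tilde{\mathfrak k}$ anticommuting with every $b_{i_p}$ and commuting with every $b_{j_q}$ (no condition on other indices). *)

From mathcomp Require Import all_boot.
Set Implicit Arguments. Unset Strict Implicit. Unset Printing Implicit Defensive.

(* Single-qubit Pauli letters up to phase, encoded in 'I_4:
   0 = I, 1 = X, 2 = Y, 3 = Z. *)
Definition pauli1 := 'I_4.

Definition anticomm1 (a b : pauli1) : bool :=
  [&& (val a != 0), (val b != 0) & (a != b)].

(* Product of single-qubit Paulis up to phase:  XY ~ Z, XZ ~ Y, YZ ~ X, PP = I. *)
Definition pmul1 (a b : pauli1) : pauli1 :=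
  inord (if val a == 0 then val b else if val b == 0 then val a
         else if a == b then 0 else 6 - val a - val b).

Definition pstring (n : nat) := {ffun 'I_n -> pauli1}.

(* The all-identity string (not a Pauli string in the paper's sense). *)
Definition pid (n : nat) : pstring n := [ffun => ord0].

Definition anticomm n (s t : pstring n) : bool :=
  odd #|[set i | anticomm1 (s i) (t i)]|.

(* Product of Pauli strings up to phase (the commutator [s,t] of anticommuting
   strings is a nonzero multiple of this string). *)
Definition pmul n (s t : pstring n) : pstring n := [ffun i => pmul1 (s i) (t i)].

(* Pauli-spanned Cartan decomposition g = k (+) m, given by the Pauli sets
   Kt = k~ and Mt = m~ (disjoint, non-identity strings). Since the Pauli strings
   are linearly independent and [i s, i t] is 0 if s,t commute and a nonzero
   multiple of i (s t) otherwise, the bracket conditions on the i R-spans are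
   exactly the following closure conditions. *)
Definition pauli_cartan n (Kt Mt : {set pstring n}) : Prop :=
  [/\ [disjoint Kt & Mt],
      (forall s, s \in Kt :|: Mt -> s != pid n),
      (forall s t, s \in Kt -> t \in Kt -> anticomm s t -> pmul s t \in Kt),
      (forall s t, s \in Mt -> t \in Mt -> anticomm s t -> pmul s t \in Kt) &
      (forall s t, s \in Kt -> t \in Mt -> anticomm s t -> pmul s t \in Mt)].

Definition frustration n (Kt Mt : {set pstring n}) : rel (pstring n) :=
  fun s t => [&& s \in Kt :|: Mt, t \in Kt :|: Mt & anticomm s t].

(* k~^{A}_{B}: elements of Kt anticommuting with every b_i (i in A) and
   commuting with every b_j (j in B). Indices are the paper's 1-based labels:
   the label of i : 'I_d is i.+1. *)
Definition ktil n d (Kt : {set pstring n}) (b : 'I_d -> pstring n)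
    (A B : pred nat) : {set pstring n} :=
  [set k in Kt | [forall i : 'I_d, (i.+1 \in A) ==> anticomm k (b i)]
              && [forall i : 'I_d, (i.+1 \in B) ==> ~~ anticomm k (b i)]].

Definition upto (m : nat) : pred nat := fun j => (0 < j) && (j <= m).

From mathcomp Require Import all_boot.
Set Implicit Arguments. Unset Strict Implicit. Unset Printing Implicit Defensive.

(* Write u = b_(r-1), v = b_r and W = {b_1, ..., b_(r-2)}.  Given e in k~
   anticommuting with u and v and commuting with W, the product k = e u v lies
   in k~, and composing the transvections by e and by k gives a bijection of
   Pauli strings that preserves commutation, maps k~ into itself, fixes W and
   swaps u and v.  It carries each set on the left of the statement into the
   one on the right; the same construction with u and v exchanged gives the
   converse inequalities.
   Such an e exists by connectivity.  In a Lie-closed set, passing to the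
   centralizer of one of its elements keeps two vertices connected provided
   each has a neighbour there; the given elements of k~^(r-1) and k~^r serve as
   neighbours of u and v, so u and v stay connected in the centralizer of W.
   There, a vertex anticommuting with v but not with u forces a vertex
   anticommuting with both, which lies in k~ or does after multiplication by u. *)

Lemma pauli1_ind (P : pauli1 -> Prop) :
  P (@Ordinal 4 0 isT) -> P (@Ordinal 4 1 isT) -> P (@Ordinal 4 2 isT) ->
  P (@Ordinal 4 3 isT) -> forall a, P a.
Proof.
by move=> P0 P1 P2 P3 [[|[|[|[|m]]]] lt_a4] //; rewrite (bool_irrelevance lt_a4 isT).
Qed.

Lemma val_pmul1 a b :
  val (pmul1 a b) = if val a == 0 then val b else if val b == 0 then val a
                    else if val a == val b then 0 else 6 - val a - val b.
Proof. by rewrite /pmul1 /= inordK //; move: a b; do 2!apply: pauli1_ind. Qed.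

Lemma anticomm1E a b : anticomm1 a b = [&& val a != 0, val b != 0 & val a != val b].
Proof. by []. Qed.

Lemma anticomm1C : commutative anticomm1.
Proof. by do 2!apply: pauli1_ind. Qed.

Lemma anticomm1xx a : anticomm1 a a = false.
Proof. by move: a; apply: pauli1_ind. Qed.

Lemma anticomm1_mull a b c :
  anticomm1 (pmul1 a b) c = anticomm1 a c (+) anticomm1 b c.
Proof. by move: a b c; do 3!apply: pauli1_ind; rewrite !anticomm1E val_pmul1. Qed.

Lemma pmul1C : commutative pmul1.
Proof. by do 2!apply: pauli1_ind; apply/val_inj; rewrite !val_pmul1. Qed.

Lemma pmul1A : associative pmul1.
Proof. by do 3!apply: pauli1_ind; apply/val_inj; rewrite !val_pmul1. Qed.

Lemma pmul1K a : cancel (pmul1 a) (pmul1 a).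
Proof. by move: a; do 2!apply: pauli1_ind; apply/val_inj; rewrite !val_pmul1. Qed.

Lemma xpair_neq_addb (a b c d : bool) : ((a, b) != (c, d)) = (a (+) c) || (b (+) d).
Proof. by case: a b c d => [] [] [] []. Qed.

Lemma odd_card_set (T : finType) (P : pred T) :
  odd #|[set i | P i]| = \big[addb/false]_i P i.
Proof.
rewrite -sum1_card (big_morph odd oddD (erefl (odd 0))) big_mkcond /=.
by apply: eq_bigr => i _; rewrite inE; case: (P i).
Qed.

Section PauliStrings.
Variable n : nat.
Implicit Types s t u : pstring n.

Lemma anticommC : commutative (@anticomm n).
Proof. by move=> s t; congr odd; apply: eq_card => i; rewrite !inE anticomm1C. Qed.

Lemma anticommxx s : anticomm s s = false.
Proof. by rewrite /anticomm odd_card_set big1 // => i _; rewrite anticomm1xx. Qed.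

Lemma anticomm_mull s t u : anticomm (pmul s t) u = anticomm s u (+) anticomm t u.
Proof.
rewrite /anticomm !odd_card_set -big_split /=.
by apply: eq_bigr => i _; rewrite ffunE anticomm1_mull.
Qed.

Lemma anticomm_mulr s t u : anticomm u (pmul s t) = anticomm u s (+) anticomm u t.
Proof. by rewrite anticommC anticomm_mull !(anticommC u). Qed.

Lemma pmulC : commutative (@pmul n).
Proof. by move=> s t; apply/ffunP => i; rewrite !ffunE pmul1C. Qed.

Lemma pmulA : associative (@pmul n).
Proof. by move=> s t u; apply/ffunP => i; rewrite !ffunE pmul1A. Qed.

Lemma pmulK s : cancel (pmul s) (pmul s).
Proof. by move=> t; apply/ffunP => i; rewrite !ffunE pmul1K. Qed.

End PauliStrings.

Definition transvect n (e s : pstring n) := if anticomm s e then pmul e s else s.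

Lemma anticomm_transvect n (e : pstring n) : {mono transvect e : s t / anticomm s t}.
Proof.
move=> s t; rewrite /transvect.
case se: (anticomm s e); case te: (anticomm t e);
  rewrite ?anticomm_mull ?anticomm_mulr ?anticommxx ?(anticommC e) ?se ?te;
  by case: (anticomm s t).
Qed.

Lemma transvect_anti n (e s : pstring n) : anticomm s e -> transvect e s = pmul e s.
Proof. by rewrite /transvect => ->. Qed.

Lemma transvect_comm n (e s : pstring n) : ~~ anticomm s e -> transvect e s = s.
Proof. by rewrite /transvect => /negbTE ->. Qed.

Lemma transvectK n (e : pstring n) : involutive (transvect e).
Proof.
move=> s; rewrite /transvect; case se: (anticomm s e); last by rewrite se.
by rewrite anticomm_mull anticommxx se pmulK.
Qed.

Definition pcent n (S W : {set pstring n}) : {set pstring n} :=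
  [set s in S | [forall w in W, ~~ anticomm s w]].

Definition panti n (S : {set pstring n}) (a : pstring n) (W : {set pstring n}) :=
  [set s in pcent S W | anticomm s a].

Lemma in_panti n (S : {set pstring n}) a W s :
  (s \in panti S a W) = (s \in pcent S W) && anticomm s a.
Proof. by rewrite in_set. Qed.

Lemma leq_card_panti n (F : pstring n -> pstring n) (S : {set pstring n}) a W :
    injective F -> {mono F : s t / anticomm s t} -> {homo F : s / s \in S} ->
  #|panti S a W| <= #|panti S (F a) (F @: W)|.
Proof.
move=> F_inj F_mono F_S; rewrite -(card_imset _ F_inj); apply/subset_leq_card.
apply/subsetP => _ /imsetP[s + ->]; rewrite !inE F_mono => /andP[/andP[sS sW] ->].
rewrite F_S // andbT; apply/forall_inP => _ /imsetP[w wW ->].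
by rewrite F_mono (forall_inP sW).
Qed.

Section SwapTransvection.
Variables (n : nat) (Kt Mt : {set pstring n}) (e u v : pstring n).
Hypotheses (cartan : pauli_cartan Kt Mt) (eK : e \in Kt) (uM : u \in Mt) (vM : v \in Mt).
Hypotheses (eu : anticomm e u) (ev : anticomm e v) (uv : ~~ anticomm u v).

Let k := pmul (pmul e u) v.
Let swap := transvect k \o transvect e.

Let kK : k \in Kt.
Proof.
case: cartan => _ _ _ MM KM.
by apply: MM; rewrite ?KM // anticomm_mull ev (negbTE uv).
Qed.

Let swap_inj : injective swap.
Proof. exact: inj_comp (can_inj (transvectK k)) (can_inj (transvectK e)). Qed.

Let swap_mono : {mono swap : s t / anticomm s t}.
Proof. by move=> s t; rewrite /= !anticomm_transvect. Qed.

Let swap_K : {homo swap : s / s \in Kt}.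
Proof.
case: cartan => _ _ KK _ _.
have tK f s : f \in Kt -> s \in Kt -> transvect f s \in Kt.
  by move=> fK sK; rewrite /transvect; case: ifP => // sf; rewrite KK // anticommC.
by move=> s sK; apply: tK kK (tK _ _ eK sK).
Qed.

Let swap_u : swap u = v.
Proof.
rewrite /swap /= !transvect_anti ?(anticommC u) // /k; last first.
  by rewrite !anticomm_mull !anticomm_mulr !anticommxx (anticommC u e) eu ev (negbTE uv).
by rewrite pmulC pmulK.
Qed.

Let swap_v : swap v = u.
Proof.
rewrite /swap /= !transvect_anti ?(anticommC v) // /k; last first.
  rewrite !anticomm_mull !anticomm_mulr !anticommxx (anticommC v e) (anticommC v u).
  by rewrite eu ev (negbTE uv).
by rewrite [pmul _ v]pmulC pmulC -pmulA !pmulK.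
Qed.

Let swap_id w : ~~ anticomm w e -> ~~ anticomm w u -> ~~ anticomm w v -> swap w = w.
Proof.
move=> we /negbTE wu /negbTE wv.
rewrite /swap /= (transvect_comm we) transvect_comm //.
by rewrite /k !anticomm_mulr (negbTE we) wu wv.
Qed.

Lemma leq_card_panti_swap (W : {set pstring n}) :
    {in W, forall w, [&& ~~ anticomm w e, ~~ anticomm w u & ~~ anticomm w v]} ->
  #|panti Kt u W| <= #|panti Kt v W| /\
  #|panti Kt u (v |: W)| <= #|panti Kt v (u |: W)|.
Proof.
move=> W_comm; have swapW : swap @: W = W.
  rewrite -[RHS]imset_id; apply: eq_in_imset => w /W_comm /and3P[].
  exact: swap_id.
have := leq_card_panti u W swap_inj swap_mono swap_K.
have := leq_card_panti u (v |: W) swap_inj swap_mono swap_K.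
by rewrite imsetU1 swap_u swap_v swapW.
Qed.

End SwapTransvection.

Lemma card_panti_swap n (Kt Mt W : {set pstring n}) e u v :
    pauli_cartan Kt Mt -> u \in Mt -> v \in Mt -> ~~ anticomm u v ->
    e \in panti Kt u W -> anticomm e v ->
    {in W, forall w, ~~ anticomm w u && ~~ anticomm w v} ->
  #|panti Kt u W| = #|panti Kt v W| /\
  #|panti Kt u (v |: W)| = #|panti Kt v (u |: W)|.
Proof.
move=> cartan uM vM uv; rewrite !inE => /andP[/andP[eK eW] eu] ev W_uv.
have W_euv w : w \in W -> [&& ~~ anticomm w e, ~~ anticomm w u & ~~ anticomm w v].
  by move=> wW; rewrite anticommC (forall_inP eW) ?W_uv.
have W_evu w : w \in W -> [&& ~~ anticomm w e, ~~ anticomm w v & ~~ anticomm w u].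
  by move=> /W_euv /and3P[-> -> ->].
have vu : ~~ anticomm v u by rewrite anticommC.
have [le_uv le_uvW] := leq_card_panti_swap cartan eK uM vM eu ev uv W_euv.
have [le_vu le_vuW] := leq_card_panti_swap cartan eK vM uM ev eu vu W_evu.
by split; apply/eqP; rewrite eqn_leq ?le_uv ?le_uvW.
Qed.

Definition frust n (S : {set pstring n}) : rel (pstring n) :=
  fun s t => [&& s \in S, t \in S & anticomm s t].

Definition lie_closed n (S : {set pstring n}) :=
  forall s t, s \in S -> t \in S -> anticomm s t -> pmul s t \in S.

Lemma pauli_cartan_lie_closed n (Kt Mt : {set pstring n}) :
  pauli_cartan Kt Mt -> lie_closed (Kt :|: Mt).
Proof.
case=> _ _ KK MM KM s t; rewrite !inE => /orP[sK | sM] /orP[tK | tM] st.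
- by rewrite KK.
- by rewrite KM ?orbT.
- by rewrite pmulC KM ?orbT // anticommC.
- by rewrite MM.
Qed.

Lemma pcent0 n (S : {set pstring n}) : pcent S set0 = S.
Proof. by apply/setP => s; rewrite inE andb_idr // => _; apply/forall_inP => w; rewrite inE. Qed.

Lemma pcentU1 n (S W : {set pstring n}) w :
  pcent S (w |: W) = [set s in pcent S W | ~~ anticomm s w].
Proof.
apply/setP => s; rewrite !inE -andbA; congr (_ && _).
apply/forall_inP/andP => [sW | [sW sw] t].
  by split; [apply/forall_inP => t tW|]; apply: sW; rewrite !inE ?tW ?eqxx ?orbT.
by rewrite !inE => /orP[/eqP -> // | /(forall_inP sW)].
Qed.

Lemma pcentS n (S S' W : {set pstring n}) : S \subset S' -> pcent S W \subset pcent S' W.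
Proof. by move=> /subsetP SS'; apply/subsetP => s; rewrite !inE => /andP[/SS' -> ->]. Qed.

Lemma in_pcentU1 n (S W : {set pstring n}) w s :
  (s \in pcent S (w |: W)) = (s \in pcent S W) && ~~ anticomm s w.
Proof. by rewrite pcentU1 in_set. Qed.

Lemma lie_closed_pcent n (S W : {set pstring n}) : lie_closed S -> lie_closed (pcent S W).
Proof.
move=> S_lie s t; rewrite !inE => /andP[sS sW] /andP[tS tW] st.
rewrite S_lie //=; apply/forall_inP => w wW.
by rewrite anticomm_mull (negbTE (forall_inP sW w wW)) (negbTE (forall_inP tW w wW)).
Qed.

Section FrustrationGraph.
Variables (n : nat) (S : {set pstring n}).

Lemma frust_sym : symmetric (frust S).
Proof. by move=> s t; rewrite /frust anticommC andbCA. Qed.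

Lemma frust_connect_sym : connect_sym (frust S).
Proof. exact/sym_connect_sym/frust_sym. Qed.

Lemma connect_frust_mem x y : connect (frust S) x y -> x \in S -> y \in S.
Proof.
case/connectP => p; elim: p x => [|z p IH] x /=; first by move=> _ ->.
by case/andP => /and3P[_ zS _] zp y_last _; apply: IH zp y_last zS.
Qed.

Lemma connect_frust_neighbor x y :
  connect (frust S) x y -> (exists z, frust S x z) -> exists z, frust S y z.
Proof.
case/connectP => p xp ->; case/lastP: p xp => [|p z] //= xp _.
exists (last x p); rewrite last_rcons frust_sym.
by move: xp; rewrite rcons_path => /andP[].
Qed.

Lemma connect_frust_anticomm x y a b :
    ~~ connect (frust S) x y -> x \in S -> y \in S ->
    connect (frust S) x a -> connect (frust S) y b -> ~~ anticomm a b.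
Proof.
move=> xy xS yS xa yb; apply: contra xy => ab.
have ab_edge : frust S a b.
  by rewrite /frust ab (connect_frust_mem xa) ?(connect_frust_mem yb).
apply: connect_trans xa (connect_trans (connect1 ab_edge) _).
by rewrite frust_connect_sym.
Qed.

Lemma connect_frust_attach x a w :
  x \in S -> w \in S -> connect (frust S) x a -> anticomm w a -> connect (frust S) x w.
Proof.
move=> xS wS xa wa; have aS := connect_frust_mem xa xS.
by apply: connect_trans xa (connect1 _); rewrite frust_sym /frust wa wS aS.
Qed.

End FrustrationGraph.

Section CentralizerOfOne.
Variables (n : nat) (S : {set pstring n}) (w0 : pstring n).
Hypotheses (S_lie : lie_closed S) (w0S : w0 \in S).

Let Z := [set s in S | ~~ anticomm s w0].

Lemma component_exit x y :
    x \in Z -> (exists z, frust Z x z) ->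
    connect (frust S) x y -> ~~ connect (frust Z) x y ->
  exists s z t, [/\ connect (frust Z) x s, frust Z s z, t \in S,
                    anticomm t w0 & anticomm s t].
Proof.
move=> xZ x_nbr xy_S xy_Z.
have [/existsP[s /existsP[t /and4P[xs tS tw0 st]]] | no_exit] := boolP
    [exists s, exists t, [&& connect (frust Z) x s, t \in S, anticomm t w0 & anticomm s t]].
  have [z sz] := connect_frust_neighbor xs x_nbr.
  by exists s, z, t.
have comp_closed : closed (frust S) [pred s | connect (frust Z) x s].
  apply: (intro_closed (frust_connect_sym S)) => s t /and3P[_ tS st]; rewrite !inE => xs.
  have tZ : t \in Z.
    rewrite inE tS; apply: contra no_exit => tw0.
    by apply/existsP; exists s; apply/existsP; exists t; rewrite xs tS tw0 st.
  have sZ := connect_frust_mem xs xZ.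
  by apply: connect_trans xs (connect1 _); rewrite /frust sZ tZ.
have := closed_connect comp_closed xy_S; rewrite !inE connect0 => y_comp.
by rewrite -y_comp in xy_Z.
Qed.

Lemma exit_avoiding s z t (d : bool * bool) :
    frust Z s z -> t \in S -> anticomm t w0 -> anticomm s t ->
  exists p, [/\ p \in S, anticomm p w0, (anticomm p s, anticomm p z) != d &
    forall y, ~~ anticomm s y -> ~~ anticomm z y -> anticomm p y = anticomm t y].
Proof.
rewrite /frust !inE => /and3P[/andP[sS sw0] /andP[zS zw0] sz] tS tw0 st.
have [-> | d_t] := eqVneq d (true, anticomm t z); last first.
  by exists t; split; rewrite // (anticommC t s) st eq_sym.
suff [p [pS pw0 p_sz p_agree]] : exists p, [/\ p \in S, anticomm p w0,
    (anticomm p s, anticomm p z) = (false, true) &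
    forall y, ~~ anticomm s y -> ~~ anticomm z y -> anticomm p y = anticomm t y].
  by exists p; split; rewrite // p_sz.
have ts : anticomm t s by rewrite anticommC.
have zs : anticomm z s by rewrite anticommC.
case tz: (anticomm t z).
  exists (pmul t z); split; rewrite ?anticomm_mull ?S_lie ?tw0 ?(negbTE zw0) ?ts ?zs //.
    by rewrite tz anticommxx.
  by move=> y _ /negbTE zy; rewrite anticomm_mull zy addbF.
have szS : pmul s z \in S by exact: S_lie.
exists (pmul t (pmul s z)); split.
- by rewrite S_lie // anticomm_mulr ts tz.
- by rewrite !anticomm_mull tw0 (negbTE sw0) (negbTE zw0).
- by rewrite !anticomm_mull ts zs tz sz !anticommxx.
- by move=> y /negbTE sy /negbTE zy; rewrite !anticomm_mull sy zy /= addbF.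
Qed.

Lemma cent1_sum p q :
    p \in S -> q \in S -> anticomm p w0 -> anticomm q w0 ->
  exists2 w, w \in Z & {in Z, forall a, anticomm w a = anticomm p a (+) anticomm q a}.
Proof.
move=> pS qS pw0 qw0; case pq: (anticomm p q).
  exists (pmul p q); last by move=> a _; rewrite anticomm_mull.
  by rewrite inE S_lie // anticomm_mull pw0 qw0.
have qw0S : pmul q w0 \in S by exact: S_lie.
exists (pmul p (pmul q w0)).
  by rewrite inE S_lie ?anticomm_mulr ?pq ?pw0 // !anticomm_mull pw0 qw0 anticommxx.
move=> a; rewrite inE => /andP[_ /negbTE aw0].
by rewrite !anticomm_mull (anticommC w0) aw0 addbF.
Qed.

(* If the Z-components of x and y were distinct, each would have an edge leaving
   Z.  After adjusting both exits with exit_avoiding, their combination from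
   cent1_sum lies in Z and is adjacent to both components. *)
Lemma connect_cent1 x y :
    x \in Z -> y \in Z -> (exists z, frust Z x z) -> (exists z, frust Z y z) ->
  connect (frust S) x y -> connect (frust Z) x y.
Proof.
move=> xZ yZ x_nbr y_nbr xy_S; apply/idPn => xy_Z.
have yx_S : connect (frust S) y x by rewrite frust_connect_sym.
have yx_Z : ~~ connect (frust Z) y x by rewrite frust_connect_sym.
have [s1 [z1 [t1 [xs1 s1z1 t1S t1w0 s1t1]]]] := component_exit xZ x_nbr xy_S xy_Z.
have [s2 [z2 [t2 [ys2 s2z2 t2S t2w0 s2t2]]]] := component_exit yZ y_nbr yx_S yx_Z.
have xz1 := connect_trans xs1 (connect1 s1z1).
have yz2 := connect_trans ys2 (connect1 s2z2).
have sep a b : connect (frust Z) x a -> connect (frust Z) y b ->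
    ~~ anticomm a b /\ ~~ anticomm b a.
  move=> xa yb; have ab := connect_frust_anticomm xy_Z xZ yZ xa yb.
  by split; rewrite // anticommC.
have [p1 [p1S p1w0 p1_pat p1_agree]] :=
  exit_avoiding (anticomm t2 s1, anticomm t2 z1) s1z1 t1S t1w0 s1t1.
have [p2 [p2S p2w0 p2_pat p2_agree]] :=
  exit_avoiding (anticomm t1 s2, anticomm t1 z2) s2z2 t2S t2w0 s2t2.
have [w wZ w_sum] := cent1_sum p1S p2S p1w0 p2w0.
have p2_on_x a : connect (frust Z) x a -> anticomm p2 a = anticomm t2 a.
  by move=> xa; apply: p2_agree; [case: (sep _ _ xa ys2) | case: (sep _ _ xa yz2)].
have p1_on_y b : connect (frust Z) y b -> anticomm p1 b = anticomm t1 b.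
  by move=> yb; apply: p1_agree; [case: (sep _ _ xs1 yb) | case: (sep _ _ xz1 yb)].
have xw : connect (frust Z) x w.
  have : anticomm w s1 || anticomm w z1.
    rewrite !w_sum ?(connect_frust_mem xs1) ?(connect_frust_mem xz1) //.
    by rewrite !p2_on_x // -xpair_neq_addb.
  by case/orP; [apply: connect_frust_attach xs1 | apply: connect_frust_attach xz1].
have yw : connect (frust Z) y w.
  have : anticomm w s2 || anticomm w z2.
    rewrite !w_sum ?(connect_frust_mem ys2) ?(connect_frust_mem yz2) //.
    by rewrite !p1_on_y // addbC [_ (+) anticomm p2 z2]addbC -xpair_neq_addb.
  by case/orP; [apply: connect_frust_attach ys2 | apply: connect_frust_attach yz2].
by move: xy_Z; rewrite (connect_trans xw) // frust_connect_sym.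
Qed.

End CentralizerOfOne.

Lemma connect_pcent n (S W : {set pstring n}) x y cx cy :
    lie_closed S -> W \subset pcent S W ->
    x \in pcent S W -> y \in pcent S W -> cx \in pcent S W -> cy \in pcent S W ->
    anticomm x cx -> anticomm y cy ->
  connect (frust S) x y -> connect (frust (pcent S W)) x y.
Proof.
move=> S_lie + + + + + xcx ycy xy_S; rewrite -(set_enum W).
elim: (enum W) => [|w ws IH]; first by rewrite set_nil pcent0.
rewrite set_cons => /subsetP W_comm.
have sub_pcent_ws t : t \in w |: [set:: ws] -> t \in pcent S [set:: ws].
  by move=> /W_comm; rewrite in_pcentU1 => /andP[].
have wW : w \in pcent S [set:: ws] by apply: sub_pcent_ws; rewrite setU11.
have ws_comm : [set:: ws] \subset pcent S [set:: ws].
  by apply/subsetP => t tws; apply: sub_pcent_ws; rewrite setU1r.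
rewrite !in_pcentU1 => /andP[xW xw] /andP[yW yw] /andP[cxW cxw] /andP[cyW cyw].
rewrite pcentU1; set Z := [set s in _ | _].
have inZ s : s \in pcent S [set:: ws] -> ~~ anticomm s w -> s \in Z.
  by move=> sW sw; rewrite in_set; apply/andP.
apply: connect_cent1; rewrite ?inZ //; first exact: lie_closed_pcent.
- by exists cx; rewrite /frust !inZ.
- by exists cy; rewrite /frust !inZ.
exact: IH.
Qed.

Lemma exists_anticomm_pair n (X : {set pstring n}) u v c :
    lie_closed X -> u \in X -> ~~ anticomm u v -> connect (frust X) u v ->
    c \in X -> anticomm c v -> ~~ anticomm c u ->
  exists2 s, s \in X & anticomm s u && anticomm s v.
Proof.
move=> X_lie uX uv uv_X cX cv cu.
have [/exists_inP[s sX suv] | no_pair] := boolP [exists s in X, anticomm s u && anticomm s v].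
  by exists s.
have {}no_pair s : s \in X -> anticomm s u -> ~~ anticomm s v.
  by move=> sX su; apply: contra no_pair => sv; apply/exists_inP; exists s; rewrite ?su.
pose B := [pred y | [&& y \in X, anticomm y v & ~~ anticomm y u]].
pose Y := [pred s | [&& s \in X, ~~ anticomm s v & [forall y in B, ~~ anticomm s y]]].
(* Without a vertex anticommuting with both u and v, Y is a union of components
   that contains u but not v. *)
have Y_closed : closed (frust X) Y.
  apply: (intro_closed (frust_connect_sym X)) => s t /and3P[_ tX st].
  rewrite /Y !inE => /and3P[_ sv /forall_inP sB].
  have s_comm y : y \in X -> anticomm y v -> ~~ anticomm y u -> ~~ anticomm s y.
    by move=> yX yv yu; apply: sB; rewrite /B inE yX yv yu.
  have tv : ~~ anticomm t v.
    apply/negP => tv; case tu: (anticomm t u); first by have := no_pair t tX tu; rewrite tv.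
    by have := s_comm t tX tv; rewrite tu st => /(_ isT).
  rewrite tX tv; apply/forall_inP => y; rewrite /B inE => /and3P[yX yv yu].
  apply/negP => ty; have tyX : pmul t y \in X by exact: X_lie.
  case tu: (anticomm t u).
    by have := no_pair _ tyX; rewrite !anticomm_mull tu (negbTE yu) (negbTE tv) yv => /(_ isT).
  have := s_comm _ tyX; rewrite !anticomm_mull anticomm_mulr (negbTE tv) yv tu (negbTE yu) st.
  by rewrite (negbTE (s_comm y yX yv yu)) => /(_ isT isT).
have uY : u \in Y.
  rewrite /Y inE uX uv; apply/forall_inP => y.
  by rewrite /B inE => /and3P[_ _]; rewrite anticommC.
have vY : v \notin Y.
  apply/negP; rewrite /Y inE => /and3P[_ _ /forall_inP vB].
  by have := vB c; rewrite /B inE cX cv cu anticommC cv => /(_ isT).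
by rewrite -(closed_connect Y_closed uv_X) uY in vY.
Qed.

Lemma exists_panti_pair n (Kt Mt W : {set pstring n}) u v :
    pauli_cartan Kt Mt -> W \subset pcent Mt W ->
    u \in pcent Mt W -> v \in pcent Mt W -> ~~ anticomm u v ->
    connect (frust (Kt :|: Mt)) u v ->
    panti Kt u W != set0 -> panti Kt v W != set0 ->
  exists2 e, e \in panti Kt u W & anticomm e v.
Proof.
move=> cartan W_comm uMW vMW uv uv_conn /set0Pn[c] /[!in_panti] /andP[cKW cu].
move=> /set0Pn[c'] /[!in_panti] /andP[c'KW c'v].
have [cv | cv] := boolP (anticomm c v); first by exists c; rewrite // in_panti cKW.
have [c'u | c'u] := boolP (anticomm c' u); first by exists c'; rewrite // in_panti c'KW.
pose g := Kt :|: Mt; have g_lie : lie_closed g := pauli_cartan_lie_closed cartan.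
have MgW : pcent Mt W \subset pcent g W by apply/pcentS/subsetUr.
have KgW : pcent Kt W \subset pcent g W by apply/pcentS/subsetUl.
have uc : anticomm u c by rewrite anticommC.
have vc' : anticomm v c' by rewrite anticommC.
have uX := subsetP MgW _ uMW; have c'X := subsetP KgW _ c'KW.
have uv_X := connect_pcent g_lie (subset_trans W_comm MgW) uX (subsetP MgW _ vMW)
  (subsetP KgW _ cKW) c'X uc vc' uv_conn.
have [s] := exists_anticomm_pair (lie_closed_pcent (W := W) g_lie) uX uv uv_X c'X c'v c'u.
rewrite inE => /andP[+ sW] /andP[su sv]; rewrite inE => /orP[sK | sM].
  by exists s; rewrite // in_panti inE sK sW.
case: cartan => _ _ _ MM _; move: uMW; rewrite inE => /andP[uM uW].
exists (pmul s u); last by rewrite anticomm_mull sv (negbTE uv).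
rewrite in_panti inE MM // anticomm_mull su anticommxx andbT /=.
apply/forall_inP => w wW.
by rewrite anticomm_mull (negbTE (forall_inP sW w wW)) (forall_inP uW w wW).
Qed.

Lemma uptoS m : upto m.+1 =1 predU (upto m) (pred1 m.+1).
Proof. by case=> [|j]; rewrite /upto !inE //= eqSS ltnS leq_eqVlt orbC. Qed.

Section LabelledCentralizers.
Variables (n d : nat) (Kt : {set pstring n}) (b : 'I_d -> pstring n).

Lemma eq_ktil A B B' : B =1 B' -> ktil Kt b A B = ktil Kt b A B'.
Proof.
move=> eqB; apply/setP => k; rewrite !inE; congr [&& _, _ & _].
by apply: eq_forallb => i; rewrite !unfold_in eqB.
Qed.

Lemma ktil1E (i : 'I_d) B :
  ktil Kt b (pred1 i.+1) B = panti Kt (b i) (b @: [set j : 'I_d | j.+1 \in B]).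
Proof.
apply/setP => k; rewrite in_panti !inE andbAC -andbA; congr [&& _, _ & _].
  apply/forallP/idP => [/(_ i) | ki j]; first by rewrite inE eqxx.
  by apply/implyP; rewrite inE eqSS => /eqP/ord_inj ->.
apply/forallP/forall_inP => [kB _ /imsetP[j + ->] | kW j].
  by rewrite inE => /(implyP (kB j)).
by apply/implyP => jB; apply: kW; rewrite imset_f ?inE.
Qed.

Lemma ktil1U1E (i i' : 'I_d) B :
  ktil Kt b (pred1 i.+1) (predU B (pred1 i'.+1)) =
  panti Kt (b i) (b i' |: b @: [set j : 'I_d | j.+1 \in B]).
Proof.
rewrite ktil1E (_ : [set j : 'I_d | _] = i' |: [set j : 'I_d | j.+1 \in B]) ?imsetU1 //.
by apply/setP => j; rewrite !inE eqSS orbC.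
Qed.

End LabelledCentralizers.

Theorem corollaryC4 (n d r : nat) (Kt Mt : {set pstring n})
    (b : 'I_d -> pstring n) :
  pauli_cartan Kt Mt ->
  (forall i, b i \in Mt) ->
  (forall i j, ~~ anticomm (b i) (b j)) ->
  (forall i j, connect (frustration Kt Mt) (b i) (b j)) ->
  2 <= r -> r <= d ->
  ktil Kt b (pred1 r.-1) (upto (r - 2)) != set0 ->
  ktil Kt b (pred1 r) (upto (r - 2)) != set0 ->
  #|ktil Kt b (pred1 r.-1) (upto (r - 2))| = #|ktil Kt b (pred1 r) (upto (r - 2))|
  /\ #|ktil Kt b (pred1 r.-1) (predU (upto (r - 2)) (pred1 r))|
     = #|ktil Kt b (pred1 r) (upto r.-1)|.
Proof.
move=> cartan bM b_comm b_conn.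
case: r => [|[|q]] // _ q2_le_d; rewrite !subSS subn0 /=.
pose iu := Ordinal (ltnW q2_le_d); pose iv := Ordinal q2_le_d.
rewrite (eq_ktil _ _ _ (uptoS q)) (ktil1E _ _ iu) (ktil1E _ _ iv).
rewrite (ktil1U1E _ _ iu iv) (ktil1U1E _ _ iv iu).
set W := b @: _ => ne_u ne_v.
have b_cent i : b i \in pcent Mt W.
  by rewrite inE bM; apply/forall_inP => _ /imsetP[j _ ->].
have W_comm : W \subset pcent Mt W by apply/subsetP => _ /imsetP[j _ ->].
have [e eu ev] := exists_panti_pair cartan W_comm (b_cent iu) (b_cent iv)
  (b_comm iu iv) (b_conn iu iv) ne_u ne_v.
apply: card_panti_swap cartan (bM iu) (bM iv) (b_comm iu iv) eu ev _.
by move=> _ /imsetP[j _ ->]; rewrite !b_comm.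
Qed.
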